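(* Let $G$ be the group of affine transformations $T_{a,b}:x\mapsto ax+b$ of $\mathbb{Z}/8\mathbb{Z}$ ($a\in(\mathbb{Z}/8\mathbb{Z})^\times$, $b\in\mathbb{Z}/8\mathbb{Z}$), let $U_1=\langle T_{a,0}:a\in(\mathbb{Z}/8\mathbb{Z})^\times\rangle$, $U_2=\langle T_{-1,0},T_{3,4}\rangle$, and $\Theta=U_1-U_2$ (a $G$-relation). Let $\rho$ be an irreducible $\mathbb{Q}[G]$-representation. Then $\mathcal{C}_\Theta(\rho)\equiv2\pmod{(\mathbb{Q}^\times)^2}$ if $\rho\cong I$, and $\mathcal{C}_\Theta(\rho)\equiv1\pmod{(\mathbb{Q}^\times)^2}$ otherwise.
   Context: Let $N=\langle T_{1,b}:b\in\mathbb{Z}/8\mathbb{Z}\rangle$ and $\chi$ a faithful one-dimensional complex character of $N$; $I=\mathrm{Ind}_N^G\chi$ is a $4$-dimensional irreducible representation, realisable over $\mathbb{Q}$ and independent of the choice of $\chi$, regarded as an irreducible $\mathbb{Q}[G]$-representation. A $G$-relation is a formal integer combination $\sum_jn_jV_j$ of subgroups with $\bigoplus_{n_j>0}\mathbb{Q}[G/V_j]^{n_j}\cong\bigoplus_{n_j<0}\mathbb{Q}[G/V_j]^{-n_j}$; for a $\mathbb{Q}[G]$-module $A$ with any $G$-invariant non-degenerate $\mathbb{Q}$-bilinear pairing, $\mathcal{C}_\Theta(A)=\prod_j\det(\tfrac1{\#V_j}\langle\cdot,\cdot\rangle\mid A^{V_j})^{n_j}\in\mathbb{Q}^\times/(\mathbb{Q}^\times)^2$,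 independent of the pairing. *)

From HB Require Import structures.
From mathcomp Require Import all_boot all_order all_algebra all_fingroup all_solvable all_field all_character.
Set Implicit Arguments. Unset Strict Implicit. Unset Printing Implicit Defensive.
Import Order.TTheory GRing.Theory Num.Theory.
Local Open Scope ring_scope.
Local Open Scope group_scope.

Notation Z8 := 'Z_8.

Definition affine_set : {set {perm Z8}} :=
  [set s : {perm Z8} | [exists a : Z8, exists b : Z8,
     (a \is a GRing.unit) && [forall x : Z8, s x == (a * x + b)%R]]].

Lemma affine_group_set : group_set affine_set.
Proof.
apply/group_setP; split.
  rewrite inE; apply/existsP; exists 1%R; apply/existsP; exists 0%R.
  rewrite unitr1 /=; apply/forallP => x; by rewrite perm1 mul1r addr0.
move=> s t; rewrite !inE => /existsP[a /existsP[b /andP[ua /forallP sa]]].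
move=> /existsP[c /existsP[d /andP[uc /forallP tc]]].
apply/existsP; exists (c * a)%R; apply/existsP; exists (c * b + d)%R.
rewrite unitrM uc ua /=; apply/forallP => x.
by rewrite permM (eqP (sa x)) (eqP (tc _)) mulrDr addrA mulrA.
Qed.

Canonical G_group := Group affine_group_set.
Definition G : {group {perm Z8}} := G_group.

Definition U1 : {group {perm Z8}} :=
  <<[set s : {perm Z8} | [exists a : Z8,
      (a \is a GRing.unit) && [forall x : Z8, s x == (a * x)%R]]]>>%G.

Definition U2 : {group {perm Z8}} :=
  <<[set s : {perm Z8} | [forall x : Z8, s x == (- x)%R]
                      || [forall x : Z8, s x == (3 * x + 4)%R]]>>%G.

Definition N : {group {perm Z8}} :=
  <<[set s : {perm Z8} | [exists b : Z8, [forall x : Z8, s x == (x + b)%R]]]>>%G.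

(* The factor det( (1/#V) <.,.> | A^V ) of C_Theta, for the rational
   representation rho (acting on row vectors) and the pairing
   <v,w> = v *m B *m w^T; the basis of A^V is row_base (rfix_mx rho V). *)
Definition C_factor n (rho : mx_representation rat G n) (B : 'M[rat]_n)
    (V : {set {perm Z8}}) : rat :=
  let P := row_base (rfix_mx rho V) in
  \det ((#|V|%:R)^-1 *: (P *m B *m P^T)).

Definition C_Theta n (rho : mx_representation rat G n) (B : 'M[rat]_n) : rat :=
  (C_factor rho B U1 / C_factor rho B U2)%R.

Local Close Scope group_scope.

Definition sq_class_eq (x c : rat) : Prop :=
  exists q : rat, q != 0 /\ x = c * q ^+ 2.

Definition G_invariant_pairing n (rho : mx_representation rat G n) (B : 'M[rat]_n) :=
  forall g, g \in G -> rho g *m B *m (rho g)^T = B.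

(* rho is isomorphic to I = Ind_N^G chi, chi a faithful linear character of N:
   the character of rho (extended to algC) is Ind_N^G chi. *)
Definition iso_I n (rho : mx_representation rat G n) : Prop :=
  exists chi : 'CF(N), [/\ chi \is a linear_char, cfaithful chi &
     cfRepr (map_repr ratr rho) = 'Ind[G] chi].

From HB Require Import structures.
From mathcomp Require Import all_boot all_order all_algebra all_fingroup all_solvable all_field all_character.
From mathcomp Require Import zify ring.
Set Implicit Arguments. Unset Strict Implicit. Unset Printing Implicit Defensive.
Import Order.TTheory GRing.Theory Num.Theory.
Local Open Scope ring_scope.

(* The element z = T_{1,4} is central of order 2, so rho(z) = +-1 by Schur's
   lemma. An explicit X in Q[G] satisfies V^U1 X <= V^U2, V^U2 X* <= V^U1
   (X* the adjoint for the pairing) and X X* = kappa e_U1, X* X = kappa e_U2,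
   where e_U is the sum over U and kappa = 24 - 8 z. Hence X restricts to a
   lam-conformal map between the two Gram matrices, lam = 4 (24 - 8 rho(z)),
   and C_Theta(rho) = lam ^ dim V^U1 modulo squares.
   If rho(z) = 1 then lam = 64 is a square, and rho is not I, whose character
   takes the values 4 and -4 at 1 and z.
   If rho(z) = -1 then every T_{a,b} outside {1, z} is conjugate to T_{a,b} z,
   so class functions that change sign under multiplication by z vanish there.
   This gives the character of I for rho, dim V^U1 = n / 4, and n <= 4 since
   the translates of a U1-fixed vector by T_{1,b}, b < 4, span a submodule;
   so dim V^U1 = 1 and lam = 128 = 2 * 8^2. *)

Section GramDeterminants.
Variable F : fieldType.

Lemma mxtrace_pid m r : (r <= m)%N -> \tr (pid_mx r : 'M[F]_m) = r%:R.
Proof.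
move=> le_rm; rewrite /mxtrace (eq_bigr (fun i : 'I_m => (i < r)%:R)); last first.
  by move=> i _; rewrite mxE eqxx.
rewrite -(big_mkord xpredT (fun i => (i < r)%:R)) (big_cat_nat (leq0n r) le_rm) /=.
rewrite [X in _ + X]big1_seq ?addr0 => [|i /andP[_]]; last first.
  by rewrite mem_index_iota => /andP[/leq_gtF->].
rewrite big_seq (eq_bigr (fun=> 1)) => [|i]; last by rewrite mem_index_iota => /andP[_ ->].
by rewrite -big_seq sumr_const_nat subn0.
Qed.

Lemma mxtrace_idem m (P : 'M[F]_m) : P *m P = P -> \tr P = (\rank P)%:R.
Proof.
move=> idP; have eP := mulmx_ebase P.
set L := col_ebase P in eP; set U := row_ebase P in eP; set r := \rank P in eP *.
have uL : L \in unitmx by apply: col_ebase_unit.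
have uU : U \in unitmx by apply: row_ebase_unit.
have pid_idem : pid_mx r *m (U *m L) *m pid_mx r = pid_mx r :> 'M_m.
  have PP : (L *m pid_mx r *m U) *m (L *m pid_mx r *m U) = L *m pid_mx r *m U.
    by rewrite eP idP.
  have : L *m (pid_mx r *m (U *m L) *m pid_mx r) *m U = L *m pid_mx r *m U.
    by rewrite -[RHS]PP !mulmxA.
  move/(congr1 (fun A => invmx L *m A *m invmx U)).
  by rewrite !mulmxA !mulVmx // !mul1mx -!mulmxA !mulmxV // !mulmx1.
rewrite -eP -mulmxA mxtrace_mulC -mulmxA -{1}(pid_mx_id _ _ _ (rank_leq_row P)).
by rewrite -mulmxA mxtrace_mulC pid_idem mxtrace_pid ?rank_leq_row.
Qed.

Lemma det_congruent_ratio m (K G1 G2 : 'M[F]_m) (lam s : F) :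
    lam != 0 -> s != 0 -> \det K != 0 -> \det G2 != 0 ->
    K *m G2 *m K^T = lam *: G1 ->
  exists2 q : F, q != 0 & \det (s *: G1) / \det (s *: G2) = lam ^+ m * q ^+ 2.
Proof.
move=> lam0 s0 K0 G20 eKG.
have -> : G1 = lam^-1 *: (K *m G2 *m K^T) by rewrite eKG scalerA mulVf ?scale1r.
exists (\det K / lam ^+ m); first by rewrite mulf_neq0 ?invr_eq0 ?expf_neq0.
rewrite !detZ !det_mulmx det_tr exprVn.
have sm : s ^+ m != 0 by rewrite expf_neq0.
have lm : lam ^+ m != 0 by rewrite expf_neq0.
by field; rewrite sm lm G20.
Qed.

Lemma gram_det_ratio n d1 d2 (P1 : 'M[F]_(d1, n)) (P2 : 'M[F]_(d2, n))
    (B X Xs : 'M[F]_n) (lam s : F) :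
    row_free P1 -> row_free P2 -> lam != 0 -> s != 0 ->
    (P1 *m X <= P2)%MS -> (P2 *m Xs <= P1)%MS ->
    P1 *m X *m Xs = lam *: P1 -> P2 *m Xs *m X = lam *: P2 ->
    B *m X^T = Xs *m B -> \det (P2 *m B *m P2^T) != 0 ->
  d1 = d2 /\ exists2 q : F, q != 0 &
    \det (s *: (P1 *m B *m P1^T)) / \det (s *: (P2 *m B *m P2^T)) = lam ^+ d1 * q ^+ 2.
Proof.
move=> free1 free2 lam0 s0 sX sXs e1 e2 adjX G20.
set K := P1 *m X *m pinvmx P2; set L := P2 *m Xs *m pinvmx P1.
have eK : P1 *m X = K *m P2 by rewrite mulmxKpV.
have eL : P2 *m Xs = L *m P1 by rewrite mulmxKpV.
have KL : K *m L = lam%:M.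
  by apply: (row_free_inj free1); rewrite -mulmxA -eL mulmxA -eK e1 mul_scalar_mx.
have LK : L *m K = lam%:M.
  by apply: (row_free_inj free2); rewrite -mulmxA -eK mulmxA -eL e2 mul_scalar_mx.
have le12 : (d1 <= d2)%N.
  apply: leq_trans (rank_leq_col K); apply: (@mulmx1_min_rank _ d1 d1 d2 K 1%:M (lam^-1 *: L)).
  by rewrite mul1mx -scalemxAr KL scale_scalar_mx mulVf.
have le21 : (d2 <= d1)%N.
  apply: leq_trans (rank_leq_col L); apply: (@mulmx1_min_rank _ d2 d2 d1 L 1%:M (lam^-1 *: K)).
  by rewrite mul1mx -scalemxAr LK scale_scalar_mx mulVf.
have d12 : d1 = d2 by apply/eqP; rewrite eqn_leq le12 le21.
split=> //; clear le12 le21 sX sXs e2 LK free2; move: K L eK eL KL G20.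
subst d2 => K L eK eL KL G20.
apply: (det_congruent_ratio (K := K)) => //.
  have : \det (K *m L) != 0 by rewrite KL det_scalar expf_neq0.
  by rewrite det_mulmx mulf_eq0 negb_or => /andP[].
rewrite !mulmxA -eK -!mulmxA -trmx_mul -eK trmx_mul (mulmxA B) adjX.
by rewrite !mulmxA e1 -!scalemxAl.
Qed.

Lemma gram_det_neq0 n d (P : 'M[F]_(d, n)) (B E : 'M[F]_n) (c : F) :
    row_free P -> B \in unitmx -> c != 0 -> (E <= P)%MS ->
    P *m E = c *: P -> B *m E^T = E *m B ->
  \det (P *m B *m P^T) != 0.
Proof.
move=> freeP uB c0 sEP eE adjE.
suff : row_free (P *m B *m P^T) by rewrite row_free_unit unitmxE unitfE.
rewrite -kermx_eq0; apply/eqP; set W := kermx _.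
have WG : W *m (P *m B *m P^T) = 0 by apply: mulmx_ker.
have eF : E = E *m pinvmx P *m P by rewrite mulmxKpV.
have WPBE : W *m P *m B *m E^T = 0.
  by rewrite eF trmx_mul !mulmxA -(mulmxA W) -(mulmxA W) WG mul0mx.
have WPB : W *m P *m B = 0.
  move: WPBE; rewrite -mulmxA adjE mulmxA -(mulmxA W) eE -scalemxAr -scalemxAl.
  by move/eqP; rewrite scaler_eq0 (negbTE c0) => /eqP.
apply: (row_free_inj freeP); rewrite mul0mx.
by rewrite -(mulmxK uB (W *m P)) WPB mul0mx.
Qed.

End GramDeterminants.

Lemma Z8_unit_nat (a : nat) : ((a%:R : Z8) \is a GRing.unit) = odd a.
Proof.
rewrite unitZpE // -coprime2n.
by rewrite (_ : 8 = 2 ^ 3)%N // coprime_pexpl.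
Qed.

Definition affine_fun (a b : Z8) (x : Z8) : Z8 :=
  if a \is a GRing.unit then a * x + b else x.

Lemma affine_fun_inj a b : injective (affine_fun a b).
Proof. by move=> x y; rewrite /affine_fun; case: ifP => // ua /addIr/(mulrI ua). Qed.

(* [T a b] is the paper's T_{a,b}; for even [a] it is the identity (junk). *)
Definition T (a b : nat) : {perm Z8} := perm (@affine_fun_inj a%:R b%:R).

Lemma TE a b x : odd a -> T a b x = a%:R * x + b%:R.
Proof. by move=> oa; rewrite permE /affine_fun Z8_unit_nat oa. Qed.

Lemma T_mod a b : T a b = T (a %% 8) (b %% 8).
Proof. by rewrite /T !Zp_nat_mod. Qed.

Lemma TM a b c d : odd a -> odd c -> (T a b * T c d)%g = T (a * c) (b * c + d).
Proof.
move=> oa oc; apply/permP => x.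
rewrite permM !TE ?oddM ?oa ?oc // natrM natrD natrM.
by rewrite mulrDr mulrA [c%:R * a%:R]mulrC [c%:R * b%:R]mulrC addrA.
Qed.

Lemma T1_0 : T 1 0 = 1%g.
Proof. by apply/permP => x; rewrite TE // perm1 mul1r addr0. Qed.

Lemma T_inj a b c d : odd a -> odd c -> T a b = T c d ->
  (a = c %[mod 8]) /\ (b = d %[mod 8]).
Proof.
move=> oa oc eT; have Z8_eq m k : (m%:R : Z8) = k%:R -> m = k %[mod 8].
  by move/(congr1 val); rewrite /= !val_Zp_nat.
have e0 := congr1 (fun s : {perm Z8} => s 0) eT.
have e1 := congr1 (fun s : {perm Z8} => s 1) eT.
rewrite /= !TE // !mulr0 !add0r in e0 e1; move/Z8_eq: e0 => e0.
move: e1; rewrite !mulr1 -!natrD => /Z8_eq e1; split=> //.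
by move/eqP: e1; rewrite -modnDm e0 modnDm eqn_modDr => /eqP.
Qed.

Lemma T_in_G a b : odd a -> T a b \in G.
Proof.
move=> oa; rewrite inE; apply/existsP; exists a%:R; apply/existsP; exists b%:R.
by rewrite Z8_unit_nat oa /=; apply/forallP => x; rewrite TE.
Qed.

Lemma G_T g : g \in G -> exists a b, [/\ odd a, a < 8, b < 8 & g = T a b]%N.
Proof.
rewrite inE => /existsP[a /existsP[b /andP[ua /forallP gE]]].
have oa : odd a by rewrite -Z8_unit_nat natr_Zp.
exists a, b; split=> //; apply/permP => x.
by rewrite TE // !natr_Zp (eqP (gE x)).
Qed.

Definition Tseq (s : seq (nat * nat)) := [seq T p.1 p.2 | p <- s].

Lemma card_Tseq (A : {set {perm Z8}}) (s : seq (nat * nat)) :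
    uniq s -> all (fun p => [&& odd p.1, p.1 < 8 & p.2 < 8]%N) s -> A =i Tseq s ->
  #|A| = size s.
Proof.
move=> us /allP s_ok eA; rewrite (eq_card eA) (card_uniqP _) ?size_map //.
rewrite map_inj_in_uniq // => -[a b] [c d] /s_ok/and3P[/= oa la lb].
move=> /s_ok/and3P[/= oc lc ld] /= /T_inj[] //.
by rewrite !modn_small // => -> ->.
Qed.

Definition Gpairs : seq (nat * nat) :=
  [seq p <- [seq (a, b) | a <- iota 0 8, b <- iota 0 8] | odd p.1].

Lemma card_G : #|G| = 32%N.
Proof.
have mem_Gpairs a b : ((a, b) \in Gpairs) = [&& odd a, a < 8 & b < 8]%N.
  rewrite mem_filter -[(a, b).1]/a; case: (odd a) => //; apply/idP/idP.
    move/seq.allpairsP => -[[x y] [+ + [-> ->]]].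
    by rewrite !mem_iota !add0n => /andP[_ ->] /andP[_ ->].
  by case/and3P => _ la lb; apply: allpairs_f; rewrite mem_iota.
apply: (@card_Tseq _ Gpairs) => [//||g]; first by apply/allP => -[a b]; rewrite mem_Gpairs.
apply/idP/mapP => [/G_T[a [b [oa la lb ->]]]|[[a b]]].
  by exists (a, b); rewrite ?mem_Gpairs ?oa ?la.
by rewrite mem_Gpairs => /and3P[oa _ _] ->; apply: T_in_G.
Qed.

Lemma U1_T u : u \in U1 -> exists a, [/\ odd a, (a < 8)%N & u = T a 0].
Proof.
have U1_group : group_set [set s : {perm Z8} | [exists a : Z8,
    (a \is a GRing.unit) && [forall x : Z8, s x == (a * x)%R]]].
  apply/group_setP; split.
    rewrite inE; apply/existsP; exists 1%R.
    by rewrite unitr1 /=; apply/forallP => x; rewrite perm1 mul1r.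
  move=> s t; rewrite !inE => /existsP[a /andP[ua /forallP sa]].
  move=> /existsP[c /andP[uc /forallP tc]]; apply/existsP; exists (c * a)%R.
  rewrite unitrM uc ua /=; apply/forallP => x.
  by rewrite permM (eqP (sa x)) (eqP (tc _)) mulrA.
rewrite /U1 /= gen_set_id // inE => /existsP[a /andP[ua /forallP uE]].
have oa : odd a by rewrite -Z8_unit_nat natr_Zp.
exists a; split=> //; apply/permP => x.
by rewrite TE // natr_Zp addr0 (eqP (uE x)).
Qed.

Lemma T_in_U1 a : odd a -> T a 0 \in U1.
Proof.
move=> oa; apply: mem_gen; rewrite inE; apply/existsP; exists a%:R.
by rewrite Z8_unit_nat oa /=; apply/forallP => x; rewrite TE // addr0.
Qed.

Definition U1pairs : seq (nat * nat) := [:: (1, 0); (3, 0); (5, 0); (7, 0)]%N.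

Lemma U1_Tseq : U1 =i Tseq U1pairs.
Proof.
move=> u; rewrite /Tseq; apply/idP/mapP => [/U1_T[a [oa la ->]]|[[a b]]].
  exists (a, 0%N) => //.
  have : all (fun a => odd a ==> ((a, 0%N) \in U1pairs)) (iota 0 8) by [].
  by move/allP/(_ a); rewrite mem_iota la oa => /(_ isT).
by rewrite !inE => /or4P[]/eqP[-> ->] ->; apply: T_in_U1.
Qed.

Lemma card_U1 : #|U1| = 4%N.
Proof. exact: card_Tseq U1_Tseq. Qed.

Definition U2pairs : seq (nat * nat) := [:: (1, 0); (7, 0); (3, 4); (5, 4)]%N.

Lemma Tseq_U2_group : group_set [set u in Tseq U2pairs].
Proof.
have mem_T a b : ((a %% 8, b %% 8)%N \in U2pairs) -> T a b \in Tseq U2pairs.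
  by rewrite T_mod => ab_U2; apply/mapP; exists (a %% 8, b %% 8)%N.
apply/group_setP; split; first by rewrite in_set -T1_0 mem_T.
move=> x y; rewrite !in_set => /mapP[[a b] ab_U2 ->] /mapP[[c d] cd_U2 ->].
rewrite !inE in ab_U2 cd_U2.
by case/or4P: ab_U2 => /eqP[-> ->]; case/or4P: cd_U2 => /eqP[-> ->];
  rewrite TM //; apply: mem_T.
Qed.

Canonical Tseq_U2_group_struct := Group Tseq_U2_group.

Lemma U2_Tseq : U2 =i Tseq U2pairs.
Proof.
have T7_0E x : T 7 0 x = - x.
  by rewrite TE // addr0 -mulN1r; congr (_ * _); apply/eqP.
have gensE : [set s : {perm Z8} | [forall x : Z8, s x == (- x)%R]
                      || [forall x : Z8, s x == (3 * x + 4)%R]] = [set T 7 0; T 3 4].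
  apply/setP => s; rewrite !inE; congr (_ || _); apply/forallP/eqP => [sE|-> x].
  - by apply/permP => x; rewrite T7_0E (eqP (sE x)).
  - by rewrite T7_0E.
  - by apply/permP => x; rewrite TE // (eqP (sE x)).
  - by rewrite TE.
move=> u; suff -> : (U2 : {set _}) = [set u in Tseq U2pairs] by rewrite inE.
rewrite /U2 /= gensE; apply/eqP; rewrite eqEsubset gen_subG; apply/andP; split.
  by apply/subsetP => s; rewrite !inE /= => /orP[]/eqP->; rewrite eqxx ?orbT.
have T7_0_in : T 7 0 \in <<[set T 7 0; T 3 4]>>%g by rewrite mem_gen // !inE eqxx.
have T3_4_in : T 3 4 \in <<[set T 7 0; T 3 4]>>%g by rewrite mem_gen // !inE eqxx orbT.
apply/subsetP => v; rewrite in_set !inE => /or4P[]/eqP-> //.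
  by rewrite T1_0 group1.
have -> : T 5 4 = (T 7 0 * T 3 4)%g by rewrite TM // [RHS]T_mod.
exact: groupM.
Qed.

Lemma card_U2 : #|U2| = 4%N.
Proof. exact: card_Tseq U2_Tseq. Qed.

Lemma N_T u : u \in N -> exists b, (b < 8)%N /\ u = T 1 b.
Proof.
have N_group : group_set
    [set s : {perm Z8} | [exists b : Z8, [forall x : Z8, s x == (x + b)%R]]].
  apply/group_setP; split.
    by rewrite inE; apply/existsP; exists 0; apply/forallP => x; rewrite perm1 addr0.
  move=> s t; rewrite !inE => /existsP[b /forallP sb] /existsP[c /forallP tc].
  apply/existsP; exists (b + c); apply/forallP => x.
  by rewrite permM (eqP (sb x)) (eqP (tc _)) addrA.
rewrite /N /= gen_set_id // inE => /existsP[b /forallP uE].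
exists b; split=> //; apply/permP => x.
by rewrite TE // natr_Zp mul1r (eqP (uE x)).
Qed.

Lemma T_in_N b : T 1 b \in N.
Proof.
apply: mem_gen; rewrite inE; apply/existsP; exists b%:R.
by apply/forallP => x; rewrite TE // mul1r.
Qed.

Lemma card_N : #|N| = 8%N.
Proof.
apply: (@card_Tseq _ [seq (1, b) | b <- iota 0 8]%N) => // u.
apply/idP/mapP => [/N_T[b [lb ->]]|[_ /mapP[b _ ->] ->]]; last exact: T_in_N.
by exists (1, b)%N => //; apply/mapP; exists b; rewrite ?mem_iota.
Qed.

Lemma N_sub_G : N \subset G.
Proof. by apply/subsetP => u /N_T[b [_ ->]]; apply: T_in_G. Qed.

Lemma index_G_N : #|G : N|%g = 4%N.
Proof.
have := Lagrange N_sub_G; rewrite card_G card_N => h.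
by apply/eqP; rewrite -(eqn_pmul2l (isT : 0 < 8)%N) h.
Qed.

Lemma cyclic_N : cyclic N.
Proof.
have T1_1X b : (T 1 1 ^+ b)%g = T 1 b.
  elim: b => [|b IH]; first by rewrite expg0 T1_0.
  by rewrite expgSr IH TM // mul1n muln1 addn1.
apply/cyclicP; exists (T 1 1); apply/eqP; rewrite eqEsubset cycle_subG T_in_N andbT.
by apply/subsetP => u /N_T[b [_ ->]]; rewrite -T1_1X mem_cycle.
Qed.

Lemma odd_sqr_mod8 a : odd a -> ((a * a) %% 8 = 1)%N.
Proof.
move=> oa; rewrite -modnMm.
have : odd (a %% 8) by rewrite odd_mod.
have : (a %% 8 < 8)%N by rewrite ltn_mod.
by move: (a %% 8)%N => k; do 8?[case: k => [|k] //].
Qed.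

Lemma T_inv a b : odd a -> ((T a b)^-1)%g = T a ((8 - b %% 8) * a).
Proof.
move=> oa; apply/eqP; rewrite eq_invg_mul TM // T_mod odd_sqr_mod8 //.
rewrite -mulnDl -modnMml -modnDml subnKC ?modnn ?mod0n ?T1_0 //.
by rewrite ltnW // ltn_mod.
Qed.

Definition z : {perm Z8} := T 1 4.

Lemma z_in_N : z \in N. Proof. exact: T_in_N. Qed.
Lemma z_in_G : z \in G. Proof. exact: T_in_G. Qed.

Lemma mulzz : (z * z)%g = 1%g.
Proof. by rewrite /z TM // T_mod /= T1_0. Qed.

Lemma z_neq1 : z != 1%g.
Proof. by rewrite -T1_0; apply/eqP => /T_inj[]. Qed.

Lemma commute_z g : g \in G -> commute z g.
Proof.
case/G_T=> a [b [oa _ _ ->]]; rewrite /commute /z !TM // T_mod [RHS]T_mod mul1n muln1.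
by congr (T _ _); have := odd_double_half a; rewrite oa; lia.
Qed.

Lemma z_central g : g \in G -> (z ^ g)%g = z.
Proof. by move/commute_z; rewrite conjgE => ->; rewrite mulKg. Qed.

(* [T a b * T c d = T c d * T a b * z] for some odd [c] unless [T a b] is [1] or [z]. *)
Definition conj_table : bool :=
  all (fun a => all (fun b => ((a == 1) && ((b == 0) || (b == 4))) ||
    has (fun c => has (fun d => (b * c + d == d * a + b + 4 %[mod 8]))
      (iota 0 8)) [:: 1; 3; 5; 7]) (iota 0 8)) [:: 1; 3; 5; 7]%N.

Lemma conj_tableP : conj_table. Proof. by vm_compute. Qed.

Lemma conj_mulz g : g \in G -> g \notin [set 1; z]%g ->
  exists2 h, h \in G & (g ^ h = g * z)%g.
Proof.
case/G_T=> a [b [oa la lb ->]] ab_z.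
have odd_lt8 k : odd k -> (k < 8)%N -> k \in [:: 1; 3; 5; 7]%N.
  by move=> ok; case: k ok => [|[|[|[|[|[|[|[|k]]]]]]]].
have ab_nc : ~~ ((a == 1%N) && ((b == 0%N) || (b == 4%N))).
  by apply: contra ab_z => /andP[/eqP-> /orP[]/eqP->]; rewrite !inE ?T1_0 eqxx ?orbT.
have := conj_tableP; move/allP/(_ a (odd_lt8 a oa la))/allP/(_ b).
rewrite mem_iota lb (negbTE ab_nc) => /(_ isT) /hasP[c c_odd /hasP[d _ /eqP e]].
have oc : odd c by move: c_odd; rewrite !inE => /or4P[]/eqP->.
exists (T c d); first exact: T_in_G.
suff comm_z : (T a b * T c d = T c d * (T a b * z))%g.
  by rewrite conjgE comm_z mulKg.
rewrite /z !TM ?oddM ?oa ?oc // T_mod [RHS]T_mod.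
by rewrite e !muln1 mulnC addnA.
Qed.

Lemma z_odd_class_fun_eq0 (R : numDomainType) (f : {perm Z8} -> R) :
    {in G &, forall g h, f (g ^ h)%g = f g} -> {in G, forall g, f (g * z)%g = - f g} ->
  {in G, forall g, g \notin [set 1; z]%g -> f g = 0}.
Proof.
move=> fJ fz g gG /(conj_mulz gG)[h hG e].
have : f g *+ 2 = 0 by rewrite mulr2n -{1}(fJ g h) // e fz // addNr.
by move/eqP; rewrite mulrn_eq0 => /eqP.
Qed.

(* Formal integer combinations of the [T a b]. [galg_nf] collects the
   coefficients by the residues of [a] and [b] mod 8, so identities in Q[G]
   between such combinations can be checked by computation. *)
Definition galg := seq (int * (nat * nat)).

Definition galg_term_mul (p q : int * (nat * nat)) : int * (nat * nat) :=
  ((p.1 * q.1)%R, ((p.2.1 * q.2.1)%N, (p.2.2 * q.2.1 + q.2.2)%N)).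

Definition galg_mul (l1 l2 : galg) : galg := [seq galg_term_mul p q | p <- l1, q <- l2].

Definition galg_adj (l : galg) : galg :=
  [seq (p.1, (p.2.1, ((8 - p.2.2 %% 8) * p.2.1)%N)) | p <- l].

Definition galg_sum (s : seq (nat * nat)) : galg := [seq (1%R, p) | p <- s].

Definition galg_index (a b : nat) : nat := ((a %% 8) * 8 + b %% 8)%N.

Definition galg_nf (l : galg) : seq int :=
  foldr (fun p v => let i := galg_index p.2.1 p.2.2 in set_nth 0 v i (nth 0 v i + p.1))
    (nseq 64 0) l.

Definition galg_odd (l : galg) : bool := all (fun p => odd p.2.1) l.

Definition galg_rinv (s : seq (nat * nat)) (l : galg) : bool :=
  all (fun p => galg_nf (galg_mul l [:: (1%R, p)]) == galg_nf l) s.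

Section GroupAlgebraAction.
Variables (F : fieldType) (n : nat) (rho : mx_representation F G n).

Definition rhoT a b : 'M[F]_n := rho (T a b).

Lemma rhoT_mod a b : rhoT a b = rhoT (a %% 8) (b %% 8).
Proof. by rewrite /rhoT T_mod. Qed.

Lemma rhoTM a b c d : odd a -> odd c -> rhoT a b *m rhoT c d = rhoT (a * c) (b * c + d).
Proof. by move=> oa oc; rewrite /rhoT -repr_mxM ?T_in_G // TM. Qed.

Lemma rhoT1_0 : rhoT 1 0 = 1%:M.
Proof. by rewrite /rhoT T1_0 repr_mx1. Qed.

Definition galg_mx (l : galg) : 'M[F]_n := \sum_(p <- l) p.1%:~R *: rhoT p.2.1 p.2.2.

Lemma galg_mx_cons p l : galg_mx (p :: l) = p.1%:~R *: rhoT p.2.1 p.2.2 + galg_mx l.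
Proof. exact: big_cons. Qed.

Lemma galg_mx_nil : galg_mx [::] = 0.
Proof. exact: big_nil. Qed.

Lemma galg_mx_cat l1 l2 : galg_mx (l1 ++ l2) = galg_mx l1 + galg_mx l2.
Proof. exact: big_cat. Qed.

Lemma galg_mxM l1 l2 : galg_odd l1 -> galg_odd l2 ->
  galg_mx l1 *m galg_mx l2 = galg_mx (galg_mul l1 l2).
Proof.
move=> + odd2; elim: l1 => [|p l1 IH] /=; first by rewrite galg_mx_nil mul0mx.
case/andP=> odd_p /IH {}IH.
rewrite (_ : galg_mul _ _ = map (galg_term_mul p) l2 ++ galg_mul l1 l2) //.
rewrite galg_mx_cat -IH galg_mx_cons mulmxDl; congr (_ + _); clear IH.
elim: l2 odd2 => [|q l2 IH2] /=; first by rewrite galg_mx_nil mulmx0.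
case/andP=> odd_q /IH2 {}IH2; rewrite !galg_mx_cons mulmxDr IH2.
by rewrite -scalemxAl -scalemxAr scalerA rhoTM // intrM.
Qed.

Lemma galg_mx_nf l :
  galg_mx l = \sum_(i < 64) (nth 0 (galg_nf l) i)%:~R *: rhoT (i %/ 8) (i %% 8).
Proof.
elim: l => [|p l IH].
  by rewrite galg_mx_nil big1 // => i _; rewrite nth_nseq if_same scale0r.
have lt_index : (galg_index p.2.1 p.2.2 < 64)%N.
  by rewrite /galg_index; have := ltn_mod p.2.1 8; have := ltn_mod p.2.2 8; lia.
rewrite galg_mx_cons IH /= (bigD1 (Ordinal lt_index)) //= [in RHS](bigD1 (Ordinal lt_index)) //=.
rewrite nth_set_nth /= eqxx intrD scalerDl addrCA addrA; congr (_ + _ + _).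
  rewrite /galg_index divnMDl // modnMDl divn_small ?ltn_mod // addn0 modn_mod.
  by rewrite -rhoT_mod.
by apply: eq_bigr => i ne_i; rewrite nth_set_nth /= ifN.
Qed.

Lemma galg_mx_eq l1 l2 : galg_nf l1 = galg_nf l2 -> galg_mx l1 = galg_mx l2.
Proof. by rewrite !galg_mx_nf => ->. Qed.

Lemma galg_mx_rinv s l : galg_rinv s l -> galg_odd l -> all (fun p => odd p.1) s ->
  forall p, p \in s -> galg_mx l *m rhoT p.1 p.2 = galg_mx l.
Proof.
move=> /allP l_inv odd_l /allP odd_s p p_s.
have -> : rhoT p.1 p.2 = galg_mx [:: (1%R, p)] by rewrite galg_mx_cons galg_mx_nil addr0 scale1r.
by rewrite galg_mxM /= ?odd_s ?andbT //; apply/galg_mx_eq/eqP/l_inv.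
Qed.

Lemma galg_sum_fixed m (P : 'M_(m, n)) s :
  (forall p, p \in s -> P *m rhoT p.1 p.2 = P) -> P *m galg_mx (galg_sum s) = (size s)%:R *: P.
Proof.
elim: s => [|p s IH] P_fix /=; first by rewrite galg_mx_nil mulmx0 scale0r.
rewrite galg_mx_cons mulmxDr IH => [|q q_s]; last by rewrite P_fix // inE q_s orbT.
by rewrite scale1r P_fix ?mem_head // -{1}[P]scale1r -scalerDl -natr1 addrC.
Qed.

Lemma rfix_TseqP (H : {group {perm Z8}}) s m (P : 'M_(m, n)) : H =i Tseq s ->
  (P <= rfix_mx rho H)%MS <-> (forall p, p \in s -> P *m rhoT p.1 p.2 = P).
Proof.
move=> HE; split=> [/rfix_mxP P_fix p p_s | P_fix].
  by apply: P_fix; rewrite HE; apply: map_f.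
by apply/rfix_mxP => x; rewrite HE => /mapP[p p_s ->]; apply: P_fix.
Qed.

Section Adjoint.
Variable B : 'M[F]_n.
Hypothesis B_inv : forall g, g \in G -> rho g *m B *m (rho g)^T = B.

Lemma galg_mx_adj l : galg_odd l -> B *m (galg_mx l)^T = galg_mx (galg_adj l) *m B.
Proof.
elim: l => [|p l IH] /=; first by rewrite !galg_mx_nil trmx0 mulmx0 mul0mx.
case/andP=> odd_p /IH {}IH; rewrite !galg_mx_cons linearD /= linearZ /=.
rewrite mulmxDr mulmxDl IH -scalemxAr -scalemxAl; congr (_ *: _ + _) => /=.
have TG := T_in_G p.2.2 odd_p.
rewrite /rhoT -T_inv // -{2}(B_inv TG) !mulmxA -repr_mxM ?groupV //.
by rewrite mulVg repr_mx1 mul1mx.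
Qed.

End Adjoint.
End GroupAlgebraAction.

Definition sumU1 : galg := galg_sum U1pairs.
Definition sumU2 : galg := galg_sum U2pairs.

Definition X : galg :=
  galg_mul sumU1 [seq ((if (b == 3) || (b == 5) then 1 else -1)%R, (1, b))
                 | b <- [:: 0; 1; 3; 4; 5; 7]]%N.

Definition kappa : galg := [:: (24%:Z, (1, 0)); ((-8)%R, (1, 4))]%N.

Lemma X_Xadj : galg_nf (galg_mul X (galg_adj X)) = galg_nf (galg_mul sumU1 kappa).
Proof. by vm_compute. Qed.

Lemma Xadj_X : galg_nf (galg_mul (galg_adj X) X) = galg_nf (galg_mul sumU2 kappa).
Proof. by vm_compute. Qed.

Lemma X_rinv : galg_rinv U2pairs X. Proof. by vm_compute. Qed.
Lemma Xadj_rinv : galg_rinv U1pairs (galg_adj X). Proof. by vm_compute. Qed.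
Lemma sumU1_rinv : galg_rinv U1pairs sumU1. Proof. by vm_compute. Qed.
Lemma sumU2_rinv : galg_rinv U2pairs sumU2. Proof. by vm_compute. Qed.

Lemma sumU2_adj : galg_nf (galg_adj sumU2) = galg_nf sumU2.
Proof. by vm_compute. Qed.

Lemma rho_z_sign (F : fieldType) n (rho : mx_representation F G n) :
  mx_irreducible rho -> rho z = 1%:M \/ rho z = - 1%:M.
Proof.
move=> irr; set Z := rho z.
have cZ : centgmx rho (Z - 1%:M).
  apply/centgmxP => x xG; rewrite mulmxBl mulmxBr mul1mx mulmx1.
  by rewrite -!repr_mxM ?z_in_G // (commute_z xG).
have [/subr0_eq|nZ1] := eqVneq (Z - 1%:M) 0; [by left | right].
have : (Z - 1%:M) *m (Z + 1%:M) = 0.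
  rewrite mulmxBl !mulmxDr -repr_mxM ?z_in_G // mulzz repr_mx1 mulmx1 mul1mx.
  by rewrite mulmx1 [1%:M + _]addrC subrr.
move/(congr1 (mulmx (invmx (Z - 1%:M)))); rewrite mulmxA (mulVmx (mx_Schur irr cZ nZ1)).
by rewrite mul1mx mulmx0 => /eqP; rewrite addr_eq0 => /eqP.
Qed.

Lemma T_notin_1z a b : odd a -> (a %% 8 != 1)%N -> T a b \notin [set 1; z]%g.
Proof.
move=> oa a_ne1; rewrite !inE -T1_0 /z.
by apply/norP; split; apply/eqP => /(T_inj oa (isT : odd 1))[e _]; move: a_ne1; rewrite e.
Qed.

Section ZActsByMinusOne.
Variables (F : numFieldType) (n : nat) (rho : mx_representation F G n).
Hypothesis rho_z : rho z = - 1%:M.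

Lemma mxtrace_repr_eq0 : {in G, forall g, g \notin [set 1; z]%g -> \tr (rho g) = 0}.
Proof.
apply: z_odd_class_fun_eq0 => [g h gG hG | g gG].
  rewrite conjgE !repr_mxM ?groupM ?groupV // repr_mxV // mxtrace_mulC.
  by rewrite mulmxK ?repr_mx_unit.
by rewrite repr_mxM ?z_in_G // rho_z mulmxN mulmx1 raddfN.
Qed.

Lemma rank_rfix_U1 : (\rank (rfix_mx rho U1))%:R = n%:R / 4 :> F.
Proof.
set E := galg_mx rho sumU1; set P := 4^-1 *: E.
have E_fix := galg_mx_rinv rho sumU1_rinv isT isT.
have rfix_E := (rfix_TseqP rho (rfix_mx rho U1) U1_Tseq).1 (submx_refl _).
have PP : P *m P = P.
  rewrite /P -scalemxAl -scalemxAr galg_sum_fixed //= !scalerA; congr (_ *: _).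
  by rewrite -mulrA mulVf ?mulr1 // pnatr_eq0.
have PE : (P == rfix_mx rho U1)%MS.
  apply/andP; split; first by apply/(rfix_TseqP rho _ U1_Tseq) => p p_U1; rewrite -scalemxAl E_fix.
  have -> : rfix_mx rho U1 = rfix_mx rho U1 *m P.
    by rewrite -scalemxAr galg_sum_fixed // scalerA mulVf ?scale1r // pnatr_eq0.
  exact: submxMl.
rewrite -(eqmx_rank PE) -mxtrace_idem // mxtraceZ /E /sumU1 /galg_sum /=.
rewrite !galg_mx_cons galg_mx_nil addr0 !scale1r !mxtraceD -/(rhoT rho 1 0) rhoT1_0 mxtrace1.
by rewrite !mxtrace_repr_eq0 ?T_in_G ?T_notin_1z // !addr0 mulrC.
Qed.

Lemma dim_le4 : mx_irreducible rho -> rfix_mx rho U1 != 0 -> (n <= 4)%N.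
Proof.
move=> irr nz; set v := nz_row (rfix_mx rho U1).
have v0 : v != 0 by rewrite nz_row_eq0.
have v_fix a : odd a -> v *m rhoT rho a 0 = v.
  by move=> oa; apply: (rfix_mxP U1 (nz_row_sub _)); apply: T_in_U1.
set W : 'M_(4, n) := \matrix_(i < 4) (v *m rhoT rho 1 i).
have W_row (k : 'I_4) : v *m rhoT rho 1 k = row k W by rewrite rowK.
have vT_W b : (v *m rhoT rho 1 b <= W)%MS.
  rewrite rhoT_mod; have := ltn_mod b 8; move: (b %% 8)%N => k lt_k8.
  have [lt_k4 | le4k] := ltnP k 4; first by rewrite (W_row (Ordinal lt_k4)) row_sub.
  have lt_k4 : (k - 4 < 4)%N by lia.
  have -> : rhoT rho 1 k = - rhoT rho 1 (k - 4).
    by rewrite -(mulmx1 (rhoT _ 1 (k - 4))) -mulmxN -rho_z rhoTM // !muln1 subnK.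
  by rewrite mulmxN (W_row (Ordinal lt_k4)) -scaleN1r scalemx_sub ?row_sub.
have modW : mxmodule rho <<W>>%MS.
  apply/mxmoduleP => x /G_T[a [b [oa _ _ ->]]]; rewrite (eqmxMr _ (genmxE W)) genmxE.
  apply/row_subP => i; rewrite row_mul rowK -mulmxA -/(rhoT rho a b) rhoTM //.
  have -> : rhoT rho (1 * a) (i * a + b) = rhoT rho a 0 *m rhoT rho 1 (i * a + b).
    by rewrite rhoTM // mul1n muln1 mul0n add0n.
  by rewrite mulmxA v_fix.
have W0 : <<W>>%MS != 0.
  rewrite -mxrank_eq0 mxrank_gen mxrank_eq0; apply: contra v0 => /eqP W0.
  by have := W_row 0; rewrite W0 row0 -/(rhoT rho 1 0) rhoT1_0 mulmx1 => ->.
case/mx_irrP: irr => _ /(_ _ modW W0); rewrite /row_full mxrank_gen => /eqP <-.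
exact: rank_leq_row.
Qed.

Lemma dim_eq4 : mx_irreducible rho -> n = 4%N /\ \rank (rfix_mx rho U1) = 1%N.
Proof.
move=> irr; have n_gt0 : (0 < n)%N by case/mx_irrP: irr.
have dE : (4 * \rank (rfix_mx rho U1))%N = n.
  by apply/eqP; rewrite -(eqr_nat F) natrM rank_rfix_U1 mulrC divfK ?pnatr_eq0.
have nz : rfix_mx rho U1 != 0.
  by rewrite -mxrank_eq0; apply: contraTneq n_gt0 => d0; rewrite -dE d0.
by have := dim_le4 irr nz; lia.
Qed.

End ZActsByMinusOne.

Lemma exists_faithful_linear_char :
  exists2 chi : 'CF(N), chi \is a linear_char & cfaithful chi.
Proof.
have N_2group : (2.-group N)%g by rewrite /pgroup card_N.
have N_abelian := cyclic_abelian cyclic_N.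
have cyclic_ZN : cyclic 'Z(N) by rewrite (center_idP N_abelian) cyclic_N.
have [i chi_i_faithful] := pgroup_cyclic_faithful N_2group cyclic_ZN.
by exists 'chi_i => //; move/char_abelianP: N_abelian.
Qed.

Section FaithfulLinearChar.
Variable chi : 'CF(N).
Hypotheses (chi_lin : chi \is a linear_char) (chi_faithful : cfaithful chi).

Lemma chi_z : chi z = -1.
Proof.
have : chi z ^+ 2 = 1 by rewrite expr2 -lin_charM ?z_in_N // mulzz lin_char1.
move/eqP; rewrite sqrf_eq1 => /orP[/eqP chi_z1|/eqP //].
have : z \in cfker chi.
  by rewrite cfkerEchar ?lin_charW // inE z_in_N chi_z1 lin_char1 ?eqxx.
by move/(subsetP chi_faithful); rewrite inE (negbTE z_neq1).
Qed.

Lemma cfInd_chi_mulz g : 'Ind[G] chi (g * z)%g = - 'Ind[G] chi g.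
Proof.
rewrite !cfIndE ?N_sub_G // -mulrN -sumrN; congr (_ * _); apply: eq_bigr => y yG.
rewrite conjMg z_central //.
have [gyN | gyN'] := boolP ((g ^ y)%g \in N).
  by rewrite lin_charM ?z_in_N // chi_z mulrN1.
by rewrite !cfun0 ?oppr0 // groupMr ?z_in_N.
Qed.

Lemma cfInd_chi1 : 'Ind[G] chi 1%g = 4.
Proof. by rewrite cfInd1 ?N_sub_G // index_G_N lin_char1 ?mulr1. Qed.

Lemma cfInd_chi_z : 'Ind[G] chi z = -4.
Proof. by rewrite -(mul1g z) cfInd_chi_mulz cfInd_chi1. Qed.

End FaithfulLinearChar.

Lemma cfRepr_ratrE n (rho : mx_representation rat G n) g :
  g \in G -> cfRepr (map_repr ratr rho) g = ratr (\tr (rho g)).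
Proof. by move=> gG; rewrite cfunE gG mulr1n /= trace_map_mx. Qed.

Lemma sq_class_eqMsqr x c k : k != 0 -> sq_class_eq x (c * k ^+ 2) -> sq_class_eq x c.
Proof.
move=> k0 [q [q0 ->]]; exists (k * q); split; first by rewrite mulf_neq0.
by rewrite exprMn -mulrA.
Qed.

Section InvariantPairing.
Variables (n : nat) (rho : mx_representation rat G n) (B : 'M[rat]_n).
Hypotheses (B_unit : B \in unitmx) (B_inv : G_invariant_pairing rho B).

Lemma C_Theta_sq_class (e : rat) : rho z = e%:M -> 4 * (24 - 8 * e) != 0 ->
  sq_class_eq (C_Theta rho B) ((4 * (24 - 8 * e)) ^+ \rank (rfix_mx rho U1)).
Proof.
move=> rho_z lam0; set lam := 4 * (24 - 8 * e).
set P1 := row_base (rfix_mx rho U1); set P2 := row_base (rfix_mx rho U2).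
have P1_fix : forall p, p \in U1pairs -> P1 *m rhoT rho p.1 p.2 = P1.
  by apply/(rfix_TseqP rho _ U1_Tseq); rewrite eq_row_base.
have P2_fix : forall p, p \in U2pairs -> P2 *m rhoT rho p.1 p.2 = P2.
  by apply/(rfix_TseqP rho _ U2_Tseq); rewrite eq_row_base.
set Xm := galg_mx rho X; set Xadj := galg_mx rho (galg_adj X).
have kappaE : galg_mx rho kappa = (24 - 8 * e)%:M.
  rewrite /kappa !galg_mx_cons galg_mx_nil addr0 rhoT1_0.
  by rewrite [rhoT _ 1 4]rho_z scalemx1 scale_scalar_mx -raddfD /=; congr (_%:M); ring.
have XadjE : B *m Xm^T = Xadj *m B by apply: galg_mx_adj.
have kappa_sum_act m (P : 'M_(m, n)) s l : (forall p, p \in s -> P *m rhoT rho p.1 p.2 = P) ->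
    galg_nf l = galg_nf (galg_mul (galg_sum s) kappa) -> galg_odd (galg_sum s) ->
    P *m galg_mx rho l = ((size s)%:R * (24 - 8 * e)) *: P.
  move=> P_fix l_nf odd_s; rewrite (galg_mx_eq rho l_nf) -galg_mxM // kappaE.
  by rewrite mulmxA galg_sum_fixed // mul_mx_scalar scalerA mulrC.
have sX : (P1 *m Xm <= P2)%MS.
  rewrite eq_row_base; apply/(rfix_TseqP rho _ U2_Tseq) => p p_U2.
  by rewrite -mulmxA (galg_mx_rinv rho X_rinv).
have sXadj : (P2 *m Xadj <= P1)%MS.
  rewrite eq_row_base; apply/(rfix_TseqP rho _ U1_Tseq) => p p_U1.
  by rewrite -mulmxA (galg_mx_rinv rho Xadj_rinv).
have XXadj : P1 *m Xm *m Xadj = lam *: P1.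
  by rewrite -mulmxA galg_mxM // (kappa_sum_act _ _ _ _ P1_fix X_Xadj).
have XadjX : P2 *m Xadj *m Xm = lam *: P2.
  by rewrite -mulmxA galg_mxM // (kappa_sum_act _ _ _ _ P2_fix Xadj_X).
have G2_neq0 : \det (P2 *m B *m P2^T) != 0.
  apply: (gram_det_neq0 (E := galg_mx rho sumU2) (c := 4) (row_base_free _) B_unit).
  - by rewrite pnatr_eq0.
  - rewrite eq_row_base; apply/(rfix_TseqP rho _ U2_Tseq) => p p_U2.
    by rewrite (galg_mx_rinv rho sumU2_rinv).
  - exact: galg_sum_fixed.
  - by rewrite galg_mx_adj // (galg_mx_eq rho sumU2_adj).
have [_ [q q0 Cq]] := gram_det_ratio (s := 4^-1) (row_base_free _) (row_base_free _)
  lam0 isT sX sXadj XXadj XadjX XadjE G2_neq0.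
by exists q; split=> //; rewrite /C_Theta /C_factor card_U1 card_U2.
Qed.

Lemma C_Theta_rho_z1 : rho z = 1%:M -> ~ iso_I rho /\ sq_class_eq (C_Theta rho B) 1.
Proof.
move=> rho_z; split.
  case=> chi [chi_lin chi_faithful reprE].
  have /= := congr1 (fun phi : 'CF(G) => phi 1%g) reprE.
  rewrite cfRepr_ratrE // repr_mx1 cfInd_chi1 // => repr1.
  have /= := congr1 (fun phi : 'CF(G) => phi z) reprE.
  rewrite cfRepr_ratrE ?z_in_G // rho_z repr1 cfInd_chi_z //.
  by move/eqP; rewrite -addr_eq0 -natrD pnatr_eq0.
have := C_Theta_sq_class rho_z isT.
rewrite (_ : 4 * (24 - 8 * 1) = 8 ^+ 2) // -exprM mulnC exprM.
by rewrite -[X in sq_class_eq _ X]mul1r; apply: sq_class_eqMsqr; rewrite expf_neq0.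
Qed.

Lemma C_Theta_rho_zN1 : mx_irreducible rho -> rho z = - 1%:M ->
  iso_I rho /\ sq_class_eq (C_Theta rho B) 2%:R.
Proof.
move=> irr rho_z; have [n4 r1] := dim_eq4 rho_z irr; split.
  have [chi chi_lin chi_faithful] := exists_faithful_linear_char.
  exists chi; split=> //; apply/cfunP => g.
  have [gG | gG'] := boolP (g \in G); last by rewrite !cfun0.
  rewrite cfRepr_ratrE //; have [/set2P[]-> | g_n1z] := boolP (g \in [set 1; z]%g).
  - by rewrite repr_mx1 mxtrace1 rmorph_nat cfInd_chi1 // n4.
  - by rewrite rho_z -scaleN1r mxtraceZ mxtrace1 mulN1r rmorphN rmorph_nat cfInd_chi_z // n4.
  rewrite mxtrace_repr_eq0 // rmorph0 (z_odd_class_fun_eq0 _ _ gG g_n1z) //.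
    by move=> x y _ yG; rewrite cfunJ.
  by move=> x _; rewrite cfInd_chi_mulz.
have rho_zE : rho z = (-1)%:M by rewrite rho_z raddfN.
have := C_Theta_sq_class rho_zE isT.
rewrite r1 expr1 (_ : 4 * (24 - 8 * -1) = 2%:R * 8 ^+ 2) //.
exact: sq_class_eqMsqr.
Qed.

End InvariantPairing.

Theorem mainTheorem15 (n : nat) (rho : mx_representation rat G n) (B : 'M[rat]_n) :
  mx_irreducible rho ->
  B \in unitmx ->
  G_invariant_pairing rho B ->
  (iso_I rho -> sq_class_eq (C_Theta rho B) 2%:R%R) /\
  (~ iso_I rho -> sq_class_eq (C_Theta rho B) 1%R).
Proof.
move=> irr B_unit B_inv.
have [rho_z | rho_z] := rho_z_sign irr.
  have [not_I C_sq] := C_Theta_rho_z1 B_unit B_inv rho_z.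
  by split=> // /not_I.
have [is_I C_2sq] := C_Theta_rho_zN1 B_unit B_inv irr rho_z.
by split=> // /(_ is_I).
Qed.
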